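(* Let $M$ be a finite-dimensional von Neumann algebra and let $D:M\to M$ be an additive derivation. Then $D$ can be uniquely represented as $D=D_a+D_\delta$, where $D_a(x)=ax-xa$ is the inner derivation implemented by some $a\in M$, and $D_\delta$ is the additive derivation defined below from the restriction $\delta$ of $D$ to the center $Z(M)$.
   Context: An additive derivation on a complex algebra $\mathcal A$ is an additive map $D:\mathcal A\to\mathcal A$ with $D(xy)=D(x)y+xD(y)$ for all $x,y$; such a $D$ maps the center $Z(\mathcal A)$ into itself. Construction of $D_\delta$: write $M$ via mutually orthogonal minimal central projections $z_1,\dots,z_k$ with $\sum_i z_i=\mathbf 1$ and $z_iM\cong M_{n_i}(\mathbb C)$. Let $\delta=D|_{Z(M)}$; since $\delta(zx)=z\delta(x)$ for central projections $z$, $\delta$ maps each $z_iZ(M)\cong\mathbb C$ into itself and thus induces an additive derivation $\delta_i:\mathbb C\to\mathbb C$. Fixing matrix units $e^{(i)}_{jl}$ ($1\le j,l\le n_i$) of $z_iM$, every $x\in M$ is uniquely $x=\sum_i\sum_{j,l}\lambda^{(i)}_{jl}e^{(i)}_{jl}$ with $\lambda^{(i)}_{jl}\in\mathbb C$, and $D_\delta(x)=\sum_i\sum_{j,l}\delta_i(\lambda^{(i)}_{jl})e^{(i)}_{jl}$. This $D_\delta$ is an additive derivation on $M$ whose restriction to $Z(M)$ is $\delta$. *)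

From HB Require Import structures.
From mathcomp Require Import all_boot all_order all_algebra.
Set Implicit Arguments. Unset Strict Implicit. Unset Printing Implicit Defensive.
Import Order.TTheory GRing.Theory Num.Theory.
Local Open Scope ring_scope.

(* A finite-dimensional von Neumann algebra, in its canonical form
   M = (+)_{i < k} M_{n_i}(C), with block i of size (n i).+1 (so n_i >= 1).
   Elements are dependent finite functions i |-> x_i. *)
Definition fdvN (C : numClosedFieldType) (k : nat) (n : 'I_k -> nat) : Type :=
  {dffun forall i : 'I_k, 'M[C]_((n i).+1)}.

Section FDVN.
Variables (C : numClosedFieldType) (k : nat) (n : 'I_k -> nat).
Local Notation M := (fdvN C n).

Definition vadd (x y : M) : M :=
  @finfun _ (fun i => 'M[C]_((n i).+1)) (fun i => x i + y i).
Definition vopp (x : M) : M :=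
  @finfun _ (fun i => 'M[C]_((n i).+1)) (fun i => - x i).
Definition vmul (x y : M) : M :=
  @finfun _ (fun i => 'M[C]_((n i).+1)) (fun i => x i *m y i).

Definition additive_derivation (D : M -> M) : Prop :=
  (forall x y, D (vadd x y) = vadd (D x) (D y)) /\
  (forall x y, D (vmul x y) = vadd (vmul (D x) y) (vmul x (D y))).

Definition inner_der (a : M) (x : M) : M := vadd (vmul a x) (vopp (vmul x a)).

(* lambda z_i : the central element equal to lambda*1 in block i and 0 elsewhere;
   z_i = zproj i 1 is the i-th minimal central projection. *)
Definition zproj (i : 'I_k) (l : C) : M :=
  @finfun _ (fun j => 'M[C]_((n j).+1))
    (fun j => if j == i then l%:M else 0).

(* delta_i : C -> C induced by delta = D|_{Z(M)} on z_i Z(M) ~= C via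
   lambda |-> lambda z_i; the inverse of this identification reads off
   the (0,0) entry of block i. *)
Definition delta_i (D : M -> M) (i : 'I_k) (l : C) : C :=
  (D (zproj i l)) i ord0 ord0.

Definition D_delta (D : M -> M) (x : M) : M :=
  @finfun _ (fun i => 'M[C]_((n i).+1))
    (fun i => \matrix_(j, l) delta_i D i (x i j l)).
End FDVN.

From HB Require Import structures.
From mathcomp Require Import all_boot all_order all_algebra.
Set Implicit Arguments. Unset Strict Implicit. Unset Printing Implicit Defensive.
Import Order.TTheory GRing.Theory Num.Theory.
Local Open Scope ring_scope.

(* Let e_rs be the matrix units of a block. Writing x = sum x_rs e_r0 e_0s
   and applying the Leibniz rule to e_r0 (x_rs e_0s) expresses each entry of
   D x through the first columns of the D(e_r0), the first rows of the
   D(e_0s), and the diagonal term delta(x_ab) = D(x_ab e_00)_00 (as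
   x_ab e_00 = e_00 (x_ab z_i)). Applying D to 1 = sum_t e_t0 e_0t gives
   D(e_0s)_0b = - D(e_b0)_s0, so with a_am := D(e_m0)_a0 the two remaining
   sums are (a x)_ab and -(x a)_ab. Uniqueness of D_a is immediate, as
   D_delta depends on D alone. *)

Lemma double_eq0 (V : zmodType) (d : V) : d = d + d -> d = 0.
Proof. by rewrite -{1}[d]addr0 => /addrI. Qed.

Lemma sumr_single (V : nmodType) m (j : 'I_m) (G : 'I_m -> V) :
  (forall i, i != j -> G i = 0) -> \sum_(i < m) G i = G j.
Proof. by move=> G0; rewrite (bigD1 j) //= big1 ?addr0. Qed.

Lemma sum_if_eq (V : nmodType) m (a : 'I_m) (F : 'I_m -> V) :
  \sum_(r < m) (if a == r :> nat then F r else 0) = F a.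
Proof.
by rewrite (sumr_single (j := a)) ?eqxx // => r ra; rewrite eq_sym val_eqE (negbTE ra).
Qed.

Lemma sum_if_const (V : nmodType) m (c : bool) (F : 'I_m -> V) :
  \sum_(t < m) (if c then F t else 0) = if c then \sum_(t < m) F t else 0.
Proof. by case: c; rewrite // big1. Qed.

Section BlockAlgebra.
Variables (C : numClosedFieldType) (k : nat) (n : 'I_k -> nat).
Local Notation M := (fdvN C n).
Local Notation vadd := (@vadd C k n).
Local Notation vmul := (@vmul C k n).
Local Notation vopp := (@vopp C k n).
Local Notation zproj := (@zproj C k n).

(* [munit i r s c] is c e_rs in block i; the indices are natural numbers
   because the block size depends on i. *)
Definition munit (i : 'I_k) (r s : nat) (c : C) : M :=
  @finfun _ (fun j => 'M[C]_((n j).+1))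
    (fun j => \matrix_(a, b)
       if (j == i) && (a == r :> nat) && (b == s :> nat) then c else 0).

Definition vzero : M := @finfun _ (fun j => 'M[C]_((n j).+1)) (fun j => 0).
Definition vone : M := @finfun _ (fun j => 'M[C]_((n j).+1)) (fun j => 1%:M).

Lemma munitE i r s c j a b : munit i r s c j a b =
  if (j == i) && (a == r :> nat) && (b == s :> nat) then c else 0.
Proof. by rewrite ffunE mxE. Qed.

Lemma vaddE (x y : M) j a b : vadd x y j a b = x j a b + y j a b.
Proof. by rewrite ffunE mxE. Qed.

Lemma voppE (x : M) j a b : vopp x j a b = - x j a b.
Proof. by rewrite ffunE mxE. Qed.

Lemma vmulE (x y : M) j a b : vmul x y j a b = \sum_m x j a m * y j m b.
Proof. by rewrite ffunE mxE. Qed.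

Lemma vzeroE j a b : vzero j a b = 0.
Proof. by rewrite ffunE mxE. Qed.

Lemma voneE j a b : vone j a b = (a == b)%:R.
Proof. by rewrite ffunE mxE. Qed.

Lemma zprojE i l j a b : zproj i l j a b = if j == i then l * (a == b)%:R else 0.
Proof. by rewrite ffunE; case: eqP; rewrite mxE ?mulr_natr. Qed.

Lemma D_deltaE (D : M -> M) x j a b : D_delta D x j a b = delta_i D j (x j a b).
Proof. by rewrite ffunE mxE. Qed.

Lemma fdvN_ext (x y : M) : (forall j a b, x j a b = y j a b) -> x = y.
Proof. by move=> xy; apply/ffunP => j; apply/matrixP => a b; apply: xy. Qed.

Lemma vsumE I (s : seq I) (P : pred I) (F : I -> M) j a b :
  (\big[vadd/vzero]_(t <- s | P t) F t) j a b = \sum_(t <- s | P t) F t j a b.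
Proof.
by apply: (big_morph (fun x : M => x j a b)) => [x y|]; rewrite ?vaddE ?vzeroE.
Qed.

Lemma mulv1 : right_id vone vmul.
Proof. by move=> y; apply/ffunP => j; rewrite !ffunE mulmx1. Qed.

Lemma mul1v : left_id vone vmul.
Proof. by move=> y; apply/ffunP => j; rewrite !ffunE mul1mx. Qed.

Lemma mul_munit0l i r c (y : M) j a b : vmul (munit i r 0 c) y j a b =
  if (j == i) && (a == r :> nat) then c * y j ord0 b else 0.
Proof.
rewrite vmulE; case: ifP => jar; last by rewrite big1 // => m _; rewrite munitE jar mul0r.
rewrite (bigD1 ord0) //= big1 ?addr0 => [|m /negbTE m0]; first by rewrite munitE jar.
by rewrite munitE jar (_ : (m == 0 :> nat) = false) ?mul0r //; apply: negbTE.
Qed.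

Lemma mul_munit0r i s c (y : M) j a b : vmul y (munit i 0 s c) j a b =
  if (j == i) && (b == s :> nat) then y j a ord0 * c else 0.
Proof.
rewrite vmulE; case: ifP => jbs; last first.
  rewrite big1 // => m _; rewrite munitE.
  by case: (j == i) jbs => /= [->|_]; rewrite ?andbF mulr0.
rewrite (bigD1 ord0) //= big1 ?addr0 => [|m /negbTE m0].
  by case/andP: jbs => ji bs; rewrite munitE ji bs.
by rewrite munitE (_ : (m == 0 :> nat) = false) ?andbF ?mulr0 //; apply: negbTE.
Qed.

Lemma mul_munit i s c : vmul (munit i 0 0 c) (munit i 0 s 1) = munit i 0 s c.
Proof.
apply: fdvN_ext => j a b; rewrite mul_munit0l !munitE.
by case: (j == i); case: (a == 0 :> nat); case: (b == s :> nat); rewrite ?mulr1 ?mulr0.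
Qed.

Lemma mul_zproj (y : M) i c j a b :
  vmul y (zproj i c) j a b = if j == i then y j a b * c else 0.
Proof.
rewrite !ffunE; case: eqP => _; last by rewrite mulmx0 mxE.
by rewrite mul_mx_scalar mxE mulrC.
Qed.

Lemma mul_munit_zproj (i : 'I_k) c : vmul (munit i 0 0 1) (zproj i c) = munit i 0 0 c.
Proof.
apply: fdvN_ext => j a b; rewrite mul_munit0l zprojE !munitE.
case: (j == i); case: (a == 0 :> nat); rewrite //= mul1r eq_sym -val_eqE.
by case: (b == 0 :> nat); rewrite ?mulr1 ?mulr0.
Qed.

Lemma munit_decomp (x : M) : x =
  \big[vadd/vzero]_(i < k) \big[vadd/vzero]_(r < (n i).+1)
    \big[vadd/vzero]_(s < (n i).+1) vmul (munit i r 0 1) (munit i 0 s (x i r s)).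
Proof.
apply: fdvN_ext => j a b; rewrite vsumE (sumr_single (j := j)) => [|i ij]; last first.
  rewrite vsumE big1 // => r _; rewrite vsumE big1 // => s _.
  by rewrite mul_munit0l eq_sym (negbTE ij).
rewrite vsumE; under eq_bigr => r _ do rewrite vsumE.
under eq_bigr => r _ do under eq_bigr => s _ do rewrite mul_munit0l munitE eqxx mul1r /=.
under eq_bigr => r _ do rewrite sum_if_const.
by rewrite sum_if_eq sum_if_eq.
Qed.

Lemma vone_decomp : vone =
  \big[vadd/vzero]_(i < k) \big[vadd/vzero]_(t < (n i).+1) vmul (munit i t 0 1) (munit i 0 t 1).
Proof.
apply: fdvN_ext => j a b; rewrite voneE vsumE (sumr_single (j := j)) => [|i ij]; last first.
  by rewrite vsumE big1 // => r _; rewrite mul_munit0l eq_sym (negbTE ij).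
rewrite vsumE; under eq_bigr => t _ do rewrite mul_munit0l munitE eqxx /=.
by rewrite sum_if_eq mul1r val_eqE [b == a]eq_sym; case: (a == b).
Qed.

Section Derivation.

Variable D : M -> M.
Hypothesis D_add : forall x y, D (vadd x y) = vadd (D x) (D y).
Hypothesis D_mul : forall x y, D (vmul x y) = vadd (vmul (D x) y) (vmul x (D y)).

Lemma D_vzero : D vzero = vzero.
Proof.
have zz : vzero = vadd vzero vzero by apply: fdvN_ext => j a b; rewrite vaddE vzeroE addr0.
apply: fdvN_ext => j a b; rewrite vzeroE; apply: double_eq0.
by rewrite -vaddE -D_add -zz.
Qed.

Lemma D_big I (s : seq I) (P : pred I) (F : I -> M) :
  D (\big[vadd/vzero]_(t <- s | P t) F t) = \big[vadd/vzero]_(t <- s | P t) D (F t).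
Proof. exact: (big_morph D D_add D_vzero). Qed.

Lemma D_vone : D vone = vzero.
Proof.
apply: fdvN_ext => j a b; rewrite vzeroE; apply: double_eq0.
by rewrite -vaddE -{1}[vone]mulv1 D_mul mulv1 mul1v.
Qed.

Lemma D_munit00_00 i : D (munit i 0 0 1) i ord0 ord0 = 0.
Proof.
apply: double_eq0.
by rewrite -{1}(mul_munit i 0 1) D_mul vaddE mul_munit0l mul_munit0r eqxx mulr1 mul1r.
Qed.

Lemma D_munit00_delta i c : D (munit i 0 0 c) i ord0 ord0 = delta_i D i c.
Proof.
rewrite -mul_munit_zproj D_mul vaddE mul_munit0l mul_zproj D_munit00_00 !eqxx.
by rewrite mul0r add0r mul1r.
Qed.

Lemma D_munit_skew j (s b : 'I_(n j).+1) :
  D (munit j 0 s 1) j ord0 b = - D (munit j b 0 1) j s ord0.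
Proof.
apply/eqP; rewrite -addr_eq0 addrC; apply/eqP.
have := congr1 (fun x : M => x j s b) D_vone.
rewrite vzeroE vone_decomp D_big vsumE (sumr_single (j := j)) => [|i ij]; last first.
  rewrite D_big vsumE big1 // => t _.
  by rewrite D_mul vaddE mul_munit0l mul_munit0r eq_sym (negbTE ij) addr0.
rewrite D_big vsumE.
under eq_bigr => t _ do rewrite D_mul vaddE mul_munit0l mul_munit0r eqxx /=.
by rewrite big_split /= !sum_if_eq mulr1 mul1r.
Qed.

Lemma D_munit0_entry j s c (b : 'I_(n j).+1) : D (munit j 0 s c) j ord0 b =
  (if b == s :> nat then delta_i D j c else 0) + c * D (munit j 0 s 1) j ord0 b.
Proof.
rewrite -mul_munit D_mul vaddE mul_munit0l mul_munit0r D_munit00_delta eqxx /=.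
by rewrite mulr1.
Qed.

Lemma D_entry (x : M) j a b : D x j a b =
  \sum_(r < (n j).+1) D (munit j r 0 1) j a ord0 * x j r b + delta_i D j (x j a b)
  + \sum_(s < (n j).+1) x j a s * D (munit j 0 s 1) j ord0 b.
Proof.
rewrite {1}(munit_decomp x) D_big vsumE (sumr_single (j := j)) => [|i ij]; last first.
  rewrite D_big vsumE big1 // => r _; rewrite D_big vsumE big1 // => s _.
  by rewrite D_mul vaddE mul_munit0l mul_munit0r eq_sym (negbTE ij) addr0.
rewrite D_big vsumE; under eq_bigr => r _ do rewrite D_big vsumE.
under eq_bigr => r _ do under eq_bigr => s _ do
  rewrite D_mul vaddE mul_munit0l mul_munit0r eqxx /= mul1r D_munit0_entry.
under eq_bigr => r _ do rewrite big_split /= sum_if_eq sum_if_const big_split /= sum_if_eq.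
by rewrite big_split /= sum_if_eq addrA.
Qed.

Definition implementer : M := @finfun _ (fun j => 'M[C]_((n j).+1))
  (fun j => \matrix_(a, m) D (munit j m 0 1) j a ord0).

Lemma implementerE j a m : implementer j a m = D (munit j m 0 1) j a ord0.
Proof. by rewrite ffunE mxE. Qed.

Lemma D_inner_delta x : D x = vadd (inner_der implementer x) (D_delta D x).
Proof.
apply: fdvN_ext => j a b.
rewrite D_entry !vaddE voppE !vmulE D_deltaE.
under [X in _ = X + _ + _]eq_bigr => m _ do rewrite implementerE.
under [X in _ + X = _]eq_bigr => m _ do rewrite D_munit_skew mulrN -implementerE.
by rewrite sumrN addrAC.
Qed.

End Derivation.

End BlockAlgebra.

Theorem lemma3p1 (C : numClosedFieldType) (k : nat) (n : 'I_k -> nat)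
  (D : fdvN C n -> fdvN C n) :
  additive_derivation D ->
  (exists a : fdvN C n, forall x, D x = vadd (inner_der a x) (D_delta D x)) /\
  (forall a b : fdvN C n,
     (forall x, D x = vadd (inner_der a x) (D_delta D x)) ->
     (forall x, D x = vadd (inner_der b x) (D_delta D x)) ->
     forall x, inner_der a x = inner_der b x).
Proof.
move=> [D_add D_mul]; split; first by exists (implementer D); exact: D_inner_delta.
move=> a b Da Db x; apply: fdvN_ext => j r s.
have := congr1 (fun y : fdvN C n => y j r s) (etrans (esym (Da x)) (Db x)).
by rewrite /= !vaddE => /addIr.
Qed.
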